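(* Let $\alpha,\beta$ be real (or complex) parameters, let $n,p$ be non-negative integers ($p\ge1$), and let $k_1,\ldots,k_p$ be non-negative integers with $k=k_1+\cdots+k_p$. Then $$\binom{k}{k_1,\ldots,k_p}\genfrac{\lfloor}{\rfloor}{0pt}{}{n}{k}^{\alpha,\beta}=\sum_{\substack{l_1+\cdots+l_p=n\\ l_i\ge0}}\binom{n}{l_1,\ldots,l_p}\genfrac{\lfloor}{\rfloor}{0pt}{}{l_1}{k_1}^{\alpha,\beta}\cdots\genfrac{\lfloor}{\rfloor}{0pt}{}{l_p}{k_p}^{\alpha,\beta}.$$
   Context: For parameters $\alpha,\beta$, the generalized Stirling numbers $\genfrac{\lfloor}{\rfloor}{0pt}{}{n}{k}^{\alpha,\beta}$, $0\le k\le n$, are defined by the polynomial identity in $x$ $$x(x+\alpha)\cdots(x+(n-1)\alpha)=\sum_{k=0}^{n}\genfrac{\lfloor}{\rfloor}{0pt}{}{n}{k}^{\alpha,\beta}\,x(x-\beta)\cdots(x-(k-1)\beta),$$ (empty products equal $1$), and $\genfrac{\lfloor}{\rfloor}{0pt}{}{n}{k}^{\alpha,\beta}=0$ for $k<0$ or $k>n$. $\binom{m}{m_1,\ldots,m_p}=\frac{m!}{m_1!\cdots m_p!}$ denotes the multinomial coefficient. *)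

From HB Require Import structures.
From mathcomp Require Import all_boot all_order all_algebra.
Set Implicit Arguments. Unset Strict Implicit. Unset Printing Implicit Defensive.
Import Order.TTheory GRing.Theory Num.Theory.
Local Open Scope ring_scope.

(* multinomial coefficient  m! / (m_1! ... m_p!)  (used only when sum = m) *)
Definition multinomial (m : nat) (s : seq nat) : nat :=
  (m`! %/ \prod_(x <- s) x`!)%N.

Definition rise_poly (R : nzRingType) (a : R) (n : nat) : {poly R} :=
  \prod_(i < n) ('X + (i%:R * a)%:P).
Definition fall_poly (R : nzRingType) (b : R) (k : nat) : {poly R} :=
  \prod_(j < k) ('X - (j%:R * b)%:P).

(* S is the table of generalized Stirling numbers  [n k]^{alpha,beta}:
   it vanishes for k > n and satisfies the defining polynomial identity. *)
Definition gen_stirling (R : nzRingType) (alpha beta : R) (S : nat -> nat -> R) :=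
  (forall n k, (n < k)%N -> S n k = 0) /\
  (forall n, rise_poly alpha n = \sum_(k < n.+1) S n k *: fall_poly beta k).

(* Write [x]_{k,b} = x(x-b)...(x-(k-1)b).  These satisfy the Vandermonde identity
   [x+y]_{n,b} = sum_i C(n,i) [x]_{i,b} [y]_{n-i,b}; the rising products are the
   case b = -alpha.  Expanding [x+y]_{n,-alpha} in the basis [x]_{a,beta}[y]_{b,beta}
   in two ways gives the case p = 2:
     C(a+b,a) S(n,a+b) = sum_j C(n,j) S(j,a) S(n-j,b).
   With T(m,k) = k! S(m,k) / m! this says that the truncated exponential generating
   function sum_m T(m,k) X^m of column k is multiplicative in k, so the coefficient
   of X^n in prod_i (sum_m T(m,k_i) X^m) is T(n, k_1+...+k_p); clearing the
   factorials gives the multinomial identity. *)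

From HB Require Import structures.
From mathcomp Require Import all_boot all_order all_algebra ring.
Import Order.TTheory GRing.Theory Num.Theory.
Local Open Scope ring_scope.
Set Implicit Arguments. Unset Strict Implicit. Unset Printing Implicit Defensive.

Definition gfall (A : comNzRingType) (b z : A) (k : nat) : A :=
  \prod_(j < k) (z - j%:R * b).

Section GeneralizedFalling.
Variables (A : comNzRingType) (b : A).

Lemma gfall0 z : gfall b z 0 = 1.
Proof. by rewrite /gfall big_ord0. Qed.

Lemma gfallS z k : gfall b z k.+1 = gfall b z k * (z - k%:R * b).
Proof. by rewrite /gfall big_ord_recr. Qed.

Lemma gfallD x y k :
  gfall b (x + y) k = \sum_(i < k.+1) 'C(k, i)%:R * (gfall b x i * gfall b y (k - i)).
Proof.
elim: k => [|k IH]; first by rewrite big_ord1 !gfall0 bin0 mulr1 mul1r.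
(* x + y - kb splits as (x - ib) + (y - (k-i)b) in the i-th term *)
have split_term (i : 'I_k.+1) :
    'C(k, i)%:R * (gfall b x i * gfall b y (k - i)) * (x + y - k%:R * b)
  = 'C(k, i)%:R * (gfall b x i.+1 * gfall b y (k - i))
    + 'C(k, i)%:R * (gfall b x i * gfall b y (k.+1 - i)).
  have hi : (i <= k)%N by rewrite -ltnS.
  by rewrite !gfallS subSn // gfallS natrB //; ring.
rewrite gfallS IH mulr_suml (eq_bigr _ (fun i _ => split_term i)) big_split /=.
rewrite [in RHS]big_ord_recl /= bin0 subn0 gfall0.
rewrite [X in _ = _ + X](eq_bigr (fun i : 'I_k.+1 =>
    'C(k, i)%:R * (gfall b x i.+1 * gfall b y (k - i))
    + 'C(k, i.+1)%:R * (gfall b x i.+1 * gfall b y (k - i)))); last first.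
  by move=> i _; rewrite /bump /= add1n binS natrD mulrDl subSS addrC.
rewrite big_split /= addrCA; congr (_ + _).
rewrite big_ord_recl /= bin0 subn0 gfall0; congr (_ + _).
rewrite big_ord_recr /= bin_small // mul0r addr0.
by apply: eq_bigr => i _; rewrite /bump /= add1n subSS.
Qed.

Lemma horner_fall_poly z k : (fall_poly b k).[z] = gfall b z k.
Proof. by rewrite /fall_poly horner_prod; apply: eq_bigr => j _; rewrite hornerXsubC. Qed.

Lemma horner_rise_poly z n : (rise_poly b n).[z] = gfall (- b) z n.
Proof.
rewrite /rise_poly horner_prod; apply: eq_bigr => j _.
by rewrite hornerD hornerX hornerC mulrN opprK.
Qed.

End GeneralizedFalling.

Lemma size_fall_poly (R : nzRingType) (b : R) k : size (fall_poly b k) = k.+1.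
Proof.
by rewrite /fall_poly size_prod_XsubC; congr _.+1; rewrite -[RHS]card_ord cardE enumT.
Qed.

Lemma fall_poly_free (R : nzRingType) (b : R) m (c : nat -> R) :
  \sum_(k < m) c k *: fall_poly b k = 0 -> forall k, (k < m)%N -> c k = 0.
Proof.
elim: m c => [|m IH] c H k // hk.
have cm : c m = 0.
  have := congr1 (fun q : {poly R} => q`_m) H.
  rewrite big_ord_recr /= coef0 coefD coefZ coef_sum.
  have : fall_poly b m \is monic by exact: monic_prod_XsubC.
  rewrite monicE /lead_coef size_fall_poly => /eqP ->.
  rewrite big1 ?add0r ?mulr1 // => i _.
  by rewrite coefZ nth_default ?mulr0 // size_fall_poly.
move: H; rewrite big_ord_recr /= cm scale0r addr0 => H.
by move: hk; rewrite ltnS leq_eqVlt => /predU1P [->|/(IH c H)].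
Qed.

Lemma gfall_coef_uniq (R : numDomainType) (b : R) m (c : nat -> R) :
  (forall x : R, \sum_(k < m) c k * gfall b x k = 0) -> forall k, (k < m)%N -> c k = 0.
Proof.
move=> H; apply: (fall_poly_free (b := b)).
set P := \sum_(k < m) _.
have P_vanishes x : P.[x] = 0.
  rewrite -(H x) /P horner_sum; apply: eq_bigr => k _.
  by rewrite hornerZ horner_fall_poly.
apply/eqP; apply: contraT => nz.
have := max_poly_roots nz (rs := [seq i%:R | i <- iota 0 (size P)]).
rewrite size_map size_iota ltnn; apply.
  by apply/allP => x /mapP [i _ ->]; rewrite /root P_vanishes.
by rewrite map_inj_uniq ?iota_uniq // => i j /eqP; rewrite eqr_nat => /eqP.
Qed.

Lemma big_ord_truncate (R : nzRingType) (F : nat -> R) k N :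
  (k < N)%N -> (forall i, (k < i)%N -> F i = 0) ->
  \sum_(i < N) F i = \sum_(i < k.+1) F i.
Proof.
move=> hk F0; rewrite (big_ord_widen _ _ hk) [RHS]big_mkcond /=.
by apply: eq_bigr => i _; case: ifP => // /negbT; rewrite -leqNgt => /F0.
Qed.

Lemma coef_prod_poly_compositions (R : comNzRingType) n p (F : 'I_p -> nat -> R) :
  (\prod_(i < p) \poly_(m < n.+1) F i m)`_n =
  \sum_(l : {ffun 'I_p -> 'I_n.+1} | (\sum_(i < p) (l i : nat) == n)%N)
      \prod_(i < p) F i (l i).
Proof.
under eq_bigr do rewrite poly_def.
rewrite bigA_distr_bigA /= coef_sum [RHS]big_mkcond /=.
apply: eq_bigr => l _.
under eq_bigr do rewrite -mul_polyC.
rewrite big_split /= prodrXr -rmorph_prod mul_polyC coefZ coefXn eq_sym.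
by case: ifP; rewrite ?mulr1 ?mulr0.
Qed.

Lemma natr_fact_neq0 {R : numDomainType} m : (m`!%:R : R) != 0.
Proof. by rewrite pnatr_eq0 -lt0n fact_gt0. Qed.

Lemma natr_bin_fact {R : nzSemiRingType} n j : (j <= n)%N ->
  ('C(n, j)%:R * (j`!%:R * (n - j)`!%:R) : R) = n`!%:R.
Proof. by move=> h; rewrite -!natrM bin_fact. Qed.

Section StirlingConvolution.
Variables (R : numFieldType) (alpha beta : R) (S : nat -> nat -> R).
Hypothesis hS : gen_stirling alpha beta S.

Lemma gfall_rise_expand n N x : (n < N)%N ->
  gfall (- alpha) x n = \sum_(k < N) S n k * gfall beta x k.
Proof.
move=> hn; rewrite -horner_rise_poly hS.2 horner_sum.
rewrite (big_ord_truncate (F := fun k => S n k * gfall beta x k) hn); last first.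
  by move=> i hi; rewrite hS.1 // mul0r.
by apply: eq_bigr => k _; rewrite hornerZ horner_fall_poly.
Qed.

Lemma stirling_shift_convolution n a N y : (n < N)%N -> (a < N)%N ->
  \sum_(k < N) S n k * 'C(k, a)%:R * gfall beta y (k - a)
  = \sum_(j < n.+1) 'C(n, j)%:R * S j a * gfall (- alpha) y (n - j).
Proof.
move=> hn ha; apply/eqP; rewrite -subr_eq0; apply/eqP.
pose c i := \sum_(k < N) S n k * 'C(k, i)%:R * gfall beta y (k - i)
   - \sum_(j < n.+1) 'C(n, j)%:R * S j i * gfall (- alpha) y (n - j).
apply: (@gfall_coef_uniq R beta N c) ha => x.
rewrite /c; under eq_bigr do rewrite mulrBl.
rewrite sumrB; apply/eqP; rewrite subr_eq0; apply/eqP.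
transitivity (gfall (- alpha) (x + y) n).
  rewrite (gfall_rise_expand _ hn); under eq_bigr do rewrite mulr_suml.
  rewrite exchange_big /=; apply: eq_bigr => k _.
  rewrite gfallD (big_ord_truncate (k := k)
    (F := fun i => S n k * 'C(k, i)%:R * gfall beta y (k - i) * gfall beta x i)) //.
    by rewrite mulr_sumr; apply: eq_bigr => i _; ring.
  by move=> i hi; rewrite bin_small // mulr0 !mul0r.
rewrite gfallD; under [in RHS]eq_bigr do rewrite mulr_suml.
rewrite [in RHS]exchange_big /=; apply: eq_bigr => j _.
rewrite (gfall_rise_expand _ (n := j) (N := N)); last first.
  by apply: leq_ltn_trans hn; rewrite -ltnS.
by rewrite mulr_suml mulr_sumr; apply: eq_bigr => i _; ring.
Qed.

Lemma stirling_binomial_convolution n a b :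
  'C(a + b, a)%:R * S n (a + b) = \sum_(j < n.+1) 'C(n, j)%:R * S j a * S (n - j) b.
Proof.
pose N := (n + a + b).+1.
have hnN : (n < N)%N by rewrite /N ltnS -addnA leq_addr.
have haN : (a < N)%N by rewrite /N ltnS addnAC leq_addl.
have hbN : (b < N)%N by rewrite /N ltnS leq_addl.
apply/eqP; rewrite -subr_eq0; apply/eqP.
pose c i := 'C(a + i, a)%:R * S n (a + i)
  - \sum_(j < n.+1) 'C(n, j)%:R * S j a * S (n - j) i.
apply: (@gfall_coef_uniq R beta N c) hbN => y.
rewrite /c; under eq_bigr do rewrite mulrBl.
rewrite sumrB; apply/eqP; rewrite subr_eq0; apply/eqP.
pose g k := S n k * 'C(k, a)%:R * gfall beta y (k - a).
have g0 k : (n < k)%N -> g k = 0 by move=> hk; rewrite /g hS.1 // !mul0r.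
transitivity (\sum_(k < N) g k).
  have hnaN : (n < a + N)%N by apply: leq_trans hnN (leq_addl _ _).
  rewrite (big_ord_truncate hnN g0) -(big_ord_truncate hnaN g0) big_split_ord /=.
  rewrite [X in _ = X + _]big1 ?add0r; last first.
    by move=> i _; rewrite /g bin_small ?mulr0 ?mul0r.
  by apply: eq_bigr => i _; rewrite /g addKn; ring.
rewrite /g stirling_shift_convolution //.
under [in RHS]eq_bigr do rewrite mulr_suml.
rewrite [in RHS]exchange_big /=; apply: eq_bigr => j _.
rewrite (gfall_rise_expand _ (n := n - j) (N := N)); last first.
  by apply: leq_ltn_trans hnN; apply: leq_subr.
by rewrite mulr_sumr; apply: eq_bigr => i _; ring.
Qed.

Definition nstirling m k : R := k`!%:R * S m k / m`!%:R.

Lemma nstirling_addr n a b :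
  nstirling n (a + b) = \sum_(j < n.+1) nstirling j a * nstirling (n - j) b.
Proof.
have -> : nstirling n (a + b)
    = a`!%:R * b`!%:R * ('C(a + b, a)%:R * S n (a + b)) / n`!%:R.
  by rewrite /nstirling -(natr_bin_fact (leq_addr b a)) addKn; ring.
rewrite stirling_binomial_convolution mulr_sumr mulr_suml; apply: eq_bigr => j _.
have hj : (j <= n)%N by rewrite -ltnS.
rewrite /nstirling -(natr_bin_fact hj).
have bin_neq0 : ('C(n, j)%:R : R) != 0 by rewrite pnatr_eq0 -lt0n bin_gt0.
by field; rewrite !natr_fact_neq0 bin_neq0.
Qed.

Lemma coef_prod_nstirling_egf n p (ks : 'I_p.+1 -> nat) m : (m <= n)%N ->
  (\prod_(i < p.+1) \poly_(j < n.+1) nstirling j (ks i))`_m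
  = nstirling m (\sum_(i < p.+1) ks i).
Proof.
elim: p ks m => [|p IH] ks m hm; first by rewrite !big_ord1 coef_poly ltnS hm.
rewrite big_ord_recl [in RHS]big_ord_recl coefM nstirling_addr.
apply: eq_bigr => j _; have hj : (j <= m)%N by rewrite -ltnS.
rewrite IH; last exact: leq_trans (leq_subr _ _) hm.
by rewrite coef_poly ltnS (leq_trans hj hm).
Qed.

Lemma nstirling_sum_compositions n p (ks : 'I_p -> nat) : (0 < p)%N ->
  nstirling n (\sum_(i < p) ks i) =
  \sum_(l : {ffun 'I_p -> 'I_n.+1} | (\sum_(i < p) (l i : nat) == n)%N)
      \prod_(i < p) nstirling (l i) (ks i).
Proof.
case: p ks => // p ks _.
rewrite -(coef_prod_poly_compositions n (fun i j => nstirling j (ks i))).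
exact/esym/coef_prod_nstirling_egf.
Qed.

End StirlingConvolution.

Lemma dvdn_prod_fact_sumn (s : seq nat) : (\prod_(x <- s) x`! %| (sumn s)`!)%N.
Proof.
elim: s => [|x s IH] /=; first by rewrite big_nil.
rewrite big_cons -(bin_fact (leq_addr (sumn s) x)) addKn.
exact: dvdn_mull (dvdn_mul (dvdnn _) IH).
Qed.

Lemma natr_multinomial (R : numFieldType) m p (f : 'I_p -> nat) :
  (\sum_(i < p) f i)%N = m ->
  ((multinomial m [seq f i | i <- enum 'I_p])%:R : R)
  = m`!%:R / \prod_(i < p) (f i)`!%:R.
Proof.
have sumn_f : sumn [seq f i | i <- enum 'I_p] = (\sum_(i < p) f i)%N.
  by rewrite sumnE big_map big_enum.
move=> <-; rewrite /multinomial natr_div -?sumn_f ?dvdn_prod_fact_sumn //.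
  by rewrite big_map big_enum natr_prod.
by rewrite unitfE pnatr_eq0 -lt0n prodn_gt0 // => i; apply: fact_gt0.
Qed.

Theorem theorem7 (R : numFieldType) (alpha beta : R) (S : nat -> nat -> R)
  (hS : gen_stirling alpha beta S) (n p : nat) (hp : (0 < p)%N)
  (ks : 'I_p -> nat) :
  (multinomial (\sum_(i < p) ks i) [seq ks i | i <- enum 'I_p])%:R
    * S n (\sum_(i < p) ks i)
  = \sum_(l : {ffun 'I_p -> 'I_n.+1} | (\sum_(i < p) (l i : nat) == n)%N)
      (multinomial n [seq (l i : nat) | i <- enum 'I_p])%:R
        * \prod_(i < p) S (l i) (ks i).
Proof.
have prod_fact_neq0 (f : 'I_p -> nat) : \prod_(i < p) ((f i)`!%:R : R) != 0.
  by rewrite prodf_seq_neq0; apply/allP => i _; rewrite natr_fact_neq0.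
have S_nstirling m k : S m k = m`!%:R / k`!%:R * nstirling S m k.
  by rewrite /nstirling; field; rewrite !natr_fact_neq0.
rewrite natr_multinomial // S_nstirling (nstirling_sum_compositions hS) // mulrA mulr_sumr.
apply: eq_bigr => l /eqP hl; rewrite natr_multinomial //.
have -> : \prod_(i < p) nstirling S (l i) (ks i)
    = \prod_(i < p) (ks i)`!%:R * \prod_(i < p) S (l i) (ks i) / \prod_(i < p) (l i)`!%:R.
  by rewrite -big_split -prodf_div.
by field; rewrite !prod_fact_neq0 natr_fact_neq0.
Qed.
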